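(* For all $M,N\in\Lambda^{001}$, if $M\longrightarrow_\beta^\infty N$ then $\mathcal T(M)\mathrel{\widetilde{\longrightarrow}_r^*}\mathcal T(N)$; that is, there are an index set $I$, resource terms $s_i$ and finite sums $T_i$ ($i\in I$) such that $\mathcal T(M)=\{s_i : i\in I\}$, $\mathcal T(N)=\bigcup_{i\in I}T_i$ and $s_i\longrightarrow_r^* T_i$ for each $i\in I$.
   Context: Fix a set $\mathcal V$ of variables. A 001-infinitary λ-term is a possibly infinite tree built from variables $x\in\mathcal V$, abstractions $\lambda x.M$ and applications $(M)N$ ($N$ the argument), such that every infinite branch enters infinitely often the argument position of an application node; $\Lambda^{001}$ is the set of such terms, up to α-equivalence, with fresh variables always available. $M[N/x]$ is capture-avoiding substitution. One-step β-reduction $\longrightarrow_\beta$ is the contextual closure (finite derivations) of $(\lambda x.M)N\longrightarrow_\beta M[N/x]$; $\longrightarrow_\beta^*$ its reflexive-transitive closure. The infinitary reduction $\longrightarrow_\beta^\infty$ is defined by the rules below, with possibly infinite derivations in which every infinite branch passes infinitely often through the third premise of (@): (var) $M\longrightarrow_\beta^* x\Rightarrow M\longrightarrow_\beta^\infty x$; (λ) $M\longrightarrow_\beta^*\lambda x.P$, $P\longrightarrow_\beta^\infty P'$ $\Rightarrow M\longrightarrow_\beta^\infty\lambda x.P'$; (@) $M\longrightarrow_\beta^*(P)Q$, $P\longrightarrow_\beta^\infty P'$, $Q\longrightarrow_\beta^\infty Q'$ $\Rightarrow M\longrightarrow_\beta^\infty(P')Q'$. Resource terms: $s::=x\mid\lambda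 x.s\mid\langle s\rangle\bar t$, $\bar t=[t_1,\dots,t_n]$ a finite multiset of resource terms. Finite sums are finite sets of resource terms written additively ($0$ empty), constructors extended by linearity. Resource substitution $s\langle\bar t/x\rangle$ is the sum over $\sigma\in\mathfrak S_n$ of the terms obtained by substituting $t_{\sigma(i)}$ for the $i$-th free occurrence of $x$ in $s$ if $x$ has exactly $n$ free occurrences, and $0$ otherwise. Simple resource reduction $\longmapsto_r$ is the least relation from terms (resp. monomials) to finite sums containing $\langle\lambda x.s\rangle\bar t\longmapsto_r s\langle\bar t/x\rangle$ and closed under abstraction, function and argument positions of applications, and elements of monomials. On finite sums, $\sum_{i=0}^n s_i\longrightarrow_r\sum_{i=0}^n T_i$ when $s_0\longmapsto_r T_0$ and for $1\le i\le n$ either $s_i\longmapsto_r T_i$ or $T_i=s_i$; $\longrightarrow_r^*$ is the reflexive-transitive closure (a single term is identified with the one-element sum). For sets $\mathcal S,\mathcal S'$ of resource terms, $\mathcal S\mathrel{\widetilde{\longrightarrow}_r^*}\mathcal S'$ is as spelled out in the claim. Taylor approximation $\ltimes$ is inductive: $x\ltimes x$; $s\ltimes M\Rightarrow\lambda x.s\ltimes\lambda x.M$; ($s\ltimes M$ and $t_i\ltimes N$ for all $i$) $\Rightarrow\langle s\rangle[t_1,\dots,t_n]\ltimes(M)N$. $\mathcal T(M)=\{s : s\ltimes M\}$. *)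

(* Terms are represented with de Bruijn indices (this quotients
   by alpha-equivalence; free variables are natural numbers). *)
From Stdlib Require Import List Arith PeanoNat.
Import ListNotations.

CoInductive term : Type :=
| Var : nat -> term
| Lam : term -> term
| App : term -> term -> term.   (* App M N = (M)N, N the argument *)

CoInductive bisim : term -> term -> Prop :=
| bisim_var n : bisim (Var n) (Var n)
| bisim_lam M M' : bisim M M' -> bisim (Lam M) (Lam M')
| bisim_app M M' N N' : bisim M M' -> bisim N N' -> bisim (App M N) (App M' N').

(* The 001 condition: every infinite branch enters the argument position of
   an application infinitely often.  Mixed induction/coinduction: inductive
   through lambda / function position, coinductive through argument position. *)
Inductive wf001_step (P : term -> Prop) : term -> Prop :=
| wf_var n : wf001_step P (Var n)
| wf_lam M : wf001_step P M -> wf001_step P (Lam M)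
| wf_app M N : wf001_step P M -> P N -> wf001_step P (App M N).

Definition wf001 (M : term) : Prop :=
  exists P : term -> Prop, P M /\ forall M', P M' -> wf001_step P M'.

CoFixpoint lift (c d : nat) (M : term) : term :=
  match M with
  | Var n => Var (if n <? c then n else n + d)
  | Lam M1 => Lam (lift (S c) d M1)
  | App M1 M2 => App (lift c d M1) (lift c d M2)
  end.

(* subst k N M : capture-avoiding substitution of N for the variable bound
   at depth k in M (the binder being removed); M[N/x] is subst 0 N M. *)
CoFixpoint subst (k : nat) (N : term) (M : term) : term :=
  match M with
  | Var n => if n =? k then lift 0 k N
             else if k <? n then Var (n - 1) else Var n
  | Lam M1 => Lam (subst (S k) N M1)
  | App M1 M2 => App (subst k N M1) (subst k N M2)
  end.

Inductive bstep : term -> term -> Prop :=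
| bstep_beta M N : bstep (App (Lam M) N) (subst 0 N M)
| bstep_lam M M' : bstep M M' -> bstep (Lam M) (Lam M')
| bstep_appl M M' N : bstep M M' -> bstep (App M N) (App M' N)
| bstep_appr M N N' : bstep N N' -> bstep (App M N) (App M N').

(* Reflexive-transitive closure; reflexivity is up to bisimilarity, i.e.
   terms are identified as trees. *)
Inductive bstar : term -> term -> Prop :=
| bstar_refl M M' : bisim M M' -> bstar M M'
| bstar_step M M1 M2 : bstep M M1 -> bstar M1 M2 -> bstar M M2.

(* Infinitary beta-reduction: rules (var), (lambda), (@); derivations may be
   infinite, but every infinite branch passes infinitely often through the
   third premise of (@).  Inductive layer for the other premises, greatest
   fixed point (relation R) for the third premise of (@). *)
Inductive ired_step (R : term -> term -> Prop) : term -> term -> Prop :=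
| ired_var M n : bstar M (Var n) -> ired_step R M (Var n)
| ired_lam M P P' : bstar M (Lam P) -> ired_step R P P' -> ired_step R M (Lam P')
| ired_app M P Q P' Q' :
    bstar M (App P Q) -> ired_step R P P' -> R Q Q' -> ired_step R M (App P' Q').

Definition ired (M N : term) : Prop :=
  exists R : term -> term -> Prop, R M N /\ forall M' N', R M' N' -> ired_step R M' N'.

(* Resource terms (de Bruijn); multisets represented by lists, and     *)
(* identified up to permutation via [req].                            *)

Inductive rterm : Type :=
| RVar : nat -> rterm
| RLam : rterm -> rterm
| RApp : rterm -> list rterm -> rterm.   (* <s>[t1,...,tn] *)

Inductive req : rterm -> rterm -> Prop :=
| req_var n : req (RVar n) (RVar n)
| req_lam s s' : req s s' -> req (RLam s) (RLam s')
| req_app s s' b b' : req s s' -> bag_req b b' -> req (RApp s b) (RApp s' b')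
with bag_req : list rterm -> list rterm -> Prop :=
| bag_req_nil : bag_req [] []
| bag_req_cons t t' b b1 b2 :
    req t t' -> bag_req b (b1 ++ b2) -> bag_req (t :: b) (b1 ++ t' :: b2).

(* Finite sums = finite sets of resource terms, represented by lists;
   equality of sums is equality of the underlying sets (modulo req). *)
Definition rsum := list rterm.

Definition sum_eq (S S' : rsum) : Prop :=
  (forall s, In s S -> exists s', In s' S' /\ req s s') /\
  (forall s', In s' S' -> exists s, In s S /\ req s s').

Fixpoint rlift (c d : nat) (s : rterm) : rterm :=
  match s with
  | RVar n => RVar (if n <? c then n else n + d)
  | RLam s1 => RLam (rlift (S c) d s1)
  | RApp s1 b => RApp (rlift c d s1) (map (rlift c d) b)
  end.

Fixpoint occ (k : nat) (s : rterm) : nat :=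
  match s with
  | RVar n => if n =? k then 1 else 0
  | RLam s1 => occ (S k) s1
  | RApp s1 b => occ k s1 + fold_right (fun t acc => occ k t + acc) 0 b
  end.

(* fill k s ts : replace the successive free occurrences (left to right) of
   the variable bound at depth k in s by the successive elements of ts
   (suitably lifted), removing that binder; returns the unused elements. *)
Fixpoint fill (k : nat) (s : rterm) (ts : list rterm) {struct s} : rterm * list rterm :=
  match s with
  | RVar n =>
      if n =? k then
        match ts with
        | t :: ts' => (rlift 0 k t, ts')
        | [] => (RVar n, [])
        end
      else if k <? n then (RVar (n - 1), ts) else (RVar n, ts)
  | RLam s1 => let (s1', ts') := fill (S k) s1 ts in (RLam s1', ts')
  | RApp s1 b =>
      let (s1', ts1) := fill k s1 ts in
      let fix fillb (b : list rterm) (ts : list rterm) : list rterm * list rterm :=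
          match b with
          | [] => ([], ts)
          | u :: b' =>
              let (u', ts2) := fill k u ts in
              let (b'', ts3) := fillb b' ts2 in (u' :: b'', ts3)
          end in
      let (b', ts2) := fillb b ts1 in (RApp s1' b', ts2)
  end.

(* all permutations of a list (enumerating the sigma in S_n) *)
Fixpoint insert_all {A : Type} (x : A) (l : list A) : list (list A) :=
  match l with
  | [] => [[x]]
  | y :: l' => (x :: y :: l') :: map (cons y) (insert_all x l')
  end.

Fixpoint perms {A : Type} (l : list A) : list (list A) :=
  match l with
  | [] => [[]]
  | x :: l' => concat (map (insert_all x) (perms l'))
  end.

(* Resource substitution s<tbar/x>, where x is the variable bound at depth 0
   in s: sum over sigma in S_n if x has exactly n = |tbar| occurrences,
   0 (empty sum) otherwise. *)
Definition rsubst (s : rterm) (b : list rterm) : rsum :=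
  if occ 0 s =? length b then map (fun p => fst (fill 0 s p)) (perms b) else [].

(* Simple resource reduction (terms to finite sums), constructors extended
   by linearity. *)
Inductive rstep : rterm -> rsum -> Prop :=
| rstep_beta s b : rstep (RApp (RLam s) b) (rsubst s b)
| rstep_lam s T : rstep s T -> rstep (RLam s) (map RLam T)
| rstep_appl s b T : rstep s T -> rstep (RApp s b) (map (fun s' => RApp s' b) T)
| rstep_appr s b1 t b2 T :
    rstep t T -> rstep (RApp s (b1 ++ t :: b2)) (map (fun t' => RApp s (b1 ++ t' :: b2)) T).

(* Reduction on finite sums: sum_{i=0}^n s_i -> sum_i T_i with s_0 |-> T_0 and,
   for i >= 1, s_i |-> T_i or T_i = s_i.  The list L lists (s_i, T_i), i>=1. *)
Definition red_sum (S S' : rsum) : Prop :=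
  exists (s0 : rterm) (T0 : rsum) (L : list (rterm * rsum)),
    rstep s0 T0 /\
    (forall p, In p L -> rstep (fst p) (snd p) \/ snd p = [fst p]) /\
    sum_eq S (s0 :: map fst L) /\
    sum_eq S' (T0 ++ concat (map snd L)).

Inductive red_star : rsum -> rsum -> Prop :=
| red_star_refl S S' : sum_eq S S' -> red_star S S'
| red_star_step S S1 S2 : red_sum S S1 -> red_star S1 S2 -> red_star S S2.

(* Taylor approximation s ⋉ M ; T(M) = {s | approx s M}. *)
Inductive approx : rterm -> term -> Prop :=
| approx_var n : approx (RVar n) (Var n)
| approx_lam s M : approx s M -> approx (RLam s) (Lam M)
| approx_app s b M N :
    approx s M -> (forall t, In t b -> approx t N) -> approx (RApp s b) (App M N).

From Stdlib Require Import List PeanoNat Lia Permutation Wf_nat.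
Import ListNotations.

(* Every Taylor approximant of M reduces, by resource reduction, to a finite sum of
   approximants of N, and every approximant of N occurs in such a reduct of some
   approximant of M.  For a single beta-step this is the substitution lemma of the Taylor
   expansion: the resource substitutions s<b/x> of approximants s of M and b of N
   approximate M[N/x], and every approximant of M[N/x] arises in this way.  Both properties
   are stable under contexts and composition, hence hold for finite reduction.  They pass
   to infinitary reduction by recursion on the size of the approximant, which resource
   reduction never increases, so only finitely many nodes of the infinite derivation are
   ever visited.  The index set is then the set of all such reductions s ->r* T. *)

(** * Infinitary and resource terms *)

Definition term_unfold (M : term) : term :=
  match M with Var n => Var n | Lam M1 => Lam M1 | App M1 M2 => App M1 M2 end.

Lemma term_unfold_eq M : M = term_unfold M.
Proof. destruct M; reflexivity. Qed.

Lemma lift_var c d n : lift c d (Var n) = Var (if n <? c then n else n + d).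
Proof. rewrite (term_unfold_eq (lift c d (Var n))). reflexivity. Qed.

Lemma lift_lam c d M : lift c d (Lam M) = Lam (lift (S c) d M).
Proof. rewrite (term_unfold_eq (lift c d (Lam M))). reflexivity. Qed.

Lemma lift_app c d M N : lift c d (App M N) = App (lift c d M) (lift c d N).
Proof. rewrite (term_unfold_eq (lift c d (App M N))). reflexivity. Qed.

Lemma subst_var k N n : subst k N (Var n) =
  if n =? k then lift 0 k N else if k <? n then Var (n - 1) else Var n.
Proof.
  rewrite (term_unfold_eq (subst k N (Var n))); simpl.
  destruct (n =? k); [symmetry; apply term_unfold_eq | destruct (k <? n); reflexivity].
Qed.

Lemma subst_lam k N M : subst k N (Lam M) = Lam (subst (S k) N M).
Proof. rewrite (term_unfold_eq (subst k N (Lam M))). reflexivity. Qed.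

Lemma subst_app k N M1 M2 : subst k N (App M1 M2) = App (subst k N M1) (subst k N M2).
Proof. rewrite (term_unfold_eq (subst k N (App M1 M2))). reflexivity. Qed.

Lemma bisim_refl : forall M, bisim M M.
Proof. cofix CIH; intros [n|M|M N]; constructor; apply CIH. Qed.

Lemma bisim_sym : forall M M', bisim M M' -> bisim M' M.
Proof. cofix CIH; intros M M' H; destruct H; constructor; apply CIH; assumption. Qed.

Section RtermNestedInd.
Variable P : rterm -> Prop.
Hypothesis P_var : forall n, P (RVar n).
Hypothesis P_lam : forall s, P s -> P (RLam s).
Hypothesis P_app : forall s b, P s -> Forall P b -> P (RApp s b).

Fixpoint rterm_nested_ind (s : rterm) : P s :=
  match s with
  | RVar n => P_var n
  | RLam s1 => P_lam s1 (rterm_nested_ind s1)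
  | RApp s1 b => P_app s1 b (rterm_nested_ind s1)
      ((fix bag_ind (l : list rterm) : Forall P l :=
         match l with
         | [] => Forall_nil P
         | x :: l' => Forall_cons x (rterm_nested_ind x) (bag_ind l')
         end) b)
  end.
End RtermNestedInd.

Fixpoint size (s : rterm) : nat :=
  match s with
  | RVar _ => 1
  | RLam s1 => S (size s1)
  | RApp s1 b => S (size s1 + list_sum (map size b))
  end.

Definition sizes (b : list rterm) : nat := list_sum (map size b).

Lemma size_In_bag t b : In t b -> size t <= sizes b.
Proof.
  unfold sizes; induction b as [|u b IH]; simpl; [intros []|].
  intros [<-|H]; [lia | specialize (IH H); lia].
Qed.

Lemma sizes_perm b b' : Permutation b b' -> sizes b = sizes b'.
Proof. intros H; unfold sizes; apply Permutation_list_sum, Permutation_map, H. Qed.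

Lemma size_rlift : forall s c d, size (rlift c d s) = size s.
Proof.
  induction s as [n|s IH|s b IH IHb] using rterm_nested_ind; intros c d; simpl; auto.
  rewrite IH, map_map; do 2 f_equal.
  induction IHb; simpl; auto.
Qed.

(** * Taylor approximants *)

Lemma approx_bisim s M M' : approx s M -> bisim M M' -> approx s M'.
Proof.
  intros H; revert M'; induction H; intros M' HM; inversion HM; subst; constructor; auto.
Qed.

Scheme req_mind := Induction for req Sort Prop
with bag_req_mind := Induction for bag_req Sort Prop.

Lemma req_approx : forall u s, req u s -> forall M, approx s M -> approx u M.
Proof.
  apply (req_mind (fun u s _ => forall M, approx s M -> approx u M)
    (fun b b' _ => forall N, (forall t, In t b' -> approx t N) -> forall t, In t b -> approx t N)).
  - auto.
  - intros s s' _ IH M H; inversion H; subst; constructor; auto.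
  - intros s s' b b' _ IH _ IHb M H; inversion H; subst; constructor; eauto.
  - intros N _ t [].
  - intros t t' b b1 b2 _ IH _ IHb N H x [<-|Hx].
    + apply IH, H, in_or_app; simpl; auto.
    + apply (IHb N); auto.
      intros y Hy; apply H; apply in_app_or in Hy; apply in_or_app; simpl; tauto.
Qed.

Lemma req_refl s : req s s.
Proof.
  induction s as [n|s IH|s b IH IHb] using rterm_nested_ind; constructor; auto.
  induction IHb; [constructor | apply (bag_req_cons x x l [] l); auto].
Qed.

Lemma approx_lift s M c d : approx s M -> approx (rlift c d s) (lift c d M).
Proof.
  intros H; revert c; induction H; intros c; simpl.
  - rewrite lift_var; constructor.
  - rewrite lift_lam; constructor; auto.
  - rewrite lift_app; constructor; auto.
    intros t Ht; apply in_map_iff in Ht; destruct Ht as [x [<- Hx]]; auto.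
Qed.

Lemma approx_lift_inv : forall u M c d,
  approx u (lift c d M) -> exists s, approx s M /\ u = rlift c d s.
Proof.
  induction u as [n|u IH|u b IH IHb] using rterm_nested_ind; intros M c d H;
    destruct M as [m|M1|M1 M2];
    rewrite ?lift_var, ?lift_lam, ?lift_app in H;
    inversion H as [|? ? Hu|? ? ? ? Hu Hb]; subst.
  - exists (RVar m); split; [constructor | reflexivity].
  - destruct (IH M1 (S c) d) as [s [Hs ->]]; [assumption|].
    exists (RLam s); split; [constructor; auto | reflexivity].
  - destruct (IH M1 c d) as [s [Hs ->]]; [assumption|].
    assert (exists bs, (forall t, In t bs -> approx t M2) /\ b = map (rlift c d) bs)
      as [bs [Hbs ->]].
    { clear - IHb Hb; induction IHb as [|x l Hx _ IHl].
      - exists []; split; [intros t [] | reflexivity].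
      - destruct (Hx _ _ _ (Hb x (or_introl eq_refl))) as [sx [Hsx ->]].
        destruct IHl as [bs [Hbs ->]]; [intros; apply Hb; right; auto|].
        exists (sx :: bs); split; [intros t [<-|Ht]; auto | reflexivity]. }
    exists (RApp s bs); split; [constructor; auto | reflexivity].
Qed.

(** * Resource substitution *)

Fixpoint fillb (k : nat) (b ts : list rterm) : list rterm * list rterm :=
  match b with
  | [] => ([], ts)
  | u :: b' => let (u', ts1) := fill k u ts in
               let (b'', ts2) := fillb k b' ts1 in (u' :: b'', ts2)
  end.

Lemma fill_app k s b ts : fill k (RApp s b) ts =
  let (s', ts1) := fill k s ts in let (b', ts2) := fillb k b ts1 in (RApp s' b', ts2).
Proof.
  simpl; destruct (fill k s ts) as [s' ts1].
  enough (E : forall b ts, (fix fillb (b0 ts0 : list rterm) : list rterm * list rterm :=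
                 match b0 with
                 | [] => ([], ts0)
                 | u :: b' => let (u', ts2) := fill k u ts0 in
                              let (b'', ts3) := fillb b' ts2 in (u' :: b'', ts3)
                 end) b ts = fillb k b ts) by (rewrite E; reflexivity).
  clear; induction b as [|u b IH]; intros ts; simpl; [reflexivity|].
  destruct (fill k u ts); rewrite IH; reflexivity.
Qed.

Lemma In_skipn {A} n (l : list A) x : In x (skipn n l) -> In x l.
Proof. rewrite <- (firstn_skipn n l) at 2; intros H; apply in_or_app; right; exact H. Qed.

Definition occb (k : nat) (b : list rterm) : nat :=
  fold_right (fun t acc => occ k t + acc) 0 b.

Lemma approx_fill N : forall s M k ts,
  approx s M -> (forall t, In t ts -> approx t N) -> occ k s <= length ts ->
  approx (fst (fill k s ts)) (subst k N M) /\ snd (fill k s ts) = skipn (occ k s) ts.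
Proof.
  induction s as [n|s IH|s b IH IHb] using rterm_nested_ind; intros M k ts Ha Hts Hocc;
    inversion Ha as [|? ? Hs|? ? ? N0 Hs Hb]; subst.
  - rewrite subst_var; simpl in *; destruct (n =? k).
    + destruct ts as [|t ts']; simpl in Hocc; [lia|].
      split; [apply approx_lift, Hts; left|]; reflexivity.
    + destruct (k <? n); split; constructor.
  - rewrite subst_lam; simpl in *.
    destruct (IH _ (S k) ts Hs Hts Hocc) as [H1 H2].
    destruct (fill (S k) s ts); split; [constructor|]; auto.
  - rewrite subst_app, fill_app; simpl in Hocc.
    destruct (IH _ k ts Hs Hts) as [H1 H2]; [lia|].
    destruct (fill k s ts) as [s' ts1]; simpl in H1, H2; subst ts1.
    assert (Hbag : forall ts, (forall t, In t ts -> approx t N) -> occb k b <= length ts ->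
      (forall x, In x (fst (fillb k b ts)) -> approx x (subst k N N0)) /\
      snd (fillb k b ts) = skipn (occb k b) ts).
    { clear - IHb Hb; induction IHb as [|u l Hu _ IHl]; intros ts Hts Hocc; simpl in *.
      - split; [intros _ []|reflexivity].
      - destruct (Hu N0 k ts (Hb u (or_introl eq_refl)) Hts) as [A1 A2]; [lia|].
        destruct (fill k u ts) as [u' ts1]; simpl in A1, A2; subst ts1.
        destruct (IHl (fun t Ht => Hb t (or_intror Ht)) (skipn (occ k u) ts)) as [B1 B2].
        { intros t Ht; apply Hts, (In_skipn _ _ _ Ht). }
        { rewrite length_skipn; lia. }
        destruct (fillb k l (skipn (occ k u) ts)); simpl in *; split.
        + intros y [<-|Hy]; auto.
        + rewrite B2, skipn_skipn; f_equal; lia. }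
    destruct (Hbag (skipn (occ k s) ts)) as [B1 B2].
    { intros t Ht; apply Hts, (In_skipn _ _ _ Ht). }
    { rewrite length_skipn; unfold occb; lia. }
    destruct (fillb k b (skipn (occ k s) ts)); simpl in *; split.
    + constructor; auto.
    + rewrite B2, skipn_skipn; unfold occb; f_equal; lia.
Qed.

Lemma approx_subst_inv_var N u m k : approx u (subst k N (Var m)) ->
  exists s ts, approx s (Var m) /\ (forall t, In t ts -> approx t N) /\
    occ k s = length ts /\ forall rest, fill k s (ts ++ rest) = (u, rest).
Proof.
  rewrite subst_var; intros H; exists (RVar m); simpl.
  destruct (m =? k) eqn:E.
  - destruct (approx_lift_inv _ _ _ _ H) as [t [Ht ->]].
    apply Nat.eqb_eq in E; subst.
    exists [t]; repeat split; [constructor | intros x [<-|[]]; auto].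
  - exists []; repeat split; [constructor | intros x [] |].
    intros rest; destruct (k <? m); inversion H; reflexivity.
Qed.

Lemma approx_subst_inv N : forall u M k, approx u (subst k N M) ->
  exists s ts, approx s M /\ (forall t, In t ts -> approx t N) /\
    occ k s = length ts /\ forall rest, fill k s (ts ++ rest) = (u, rest).
Proof.
  induction u as [n|u IH|u b IH IHb] using rterm_nested_ind; intros M k H;
    destruct M as [m|M1|M1 M2]; try (apply approx_subst_inv_var; assumption);
    rewrite ?subst_lam, ?subst_app in H; inversion H as [|? ? Hu|? ? ? ? Hu Hb]; subst.
  - destruct (IH M1 (S k) Hu) as [s [ts [A1 [A2 [A3 A4]]]]].
    exists (RLam s), ts; repeat split; [constructor | | |]; auto.
    intros rest; simpl; rewrite A4; reflexivity.
  - destruct (IH M1 k Hu) as [s [ts [A1 [A2 [A3 A4]]]]].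
    assert (Hbag : exists bs ts', (forall x, In x bs -> approx x M2) /\
       (forall t, In t ts' -> approx t N) /\ occb k bs = length ts' /\
       forall rest, fillb k bs (ts' ++ rest) = (b, rest)).
    { clear - IHb Hb; induction IHb as [|x l Hx _ IHl].
      - exists [], []; repeat split; try (intros ? []); reflexivity.
      - destruct (Hx _ _ (Hb x (or_introl eq_refl))) as [s [ts [B1 [B2 [B3 B4]]]]].
        destruct IHl as [bs [ts' [C1 [C2 [C3 C4]]]]]; [intros; apply Hb; right; auto|].
        exists (s :: bs), (ts ++ ts'); repeat split.
        + intros y [<-|Hy]; auto.
        + intros t Ht; apply in_app_or in Ht; destruct Ht; auto.
        + unfold occb in *; simpl; rewrite length_app; lia.
        + intros rest; simpl; rewrite <- app_assoc, B4, C4; reflexivity. }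
    destruct Hbag as [bs [ts' [C1 [C2 [C3 C4]]]]].
    exists (RApp s bs), (ts ++ ts'); repeat split.
    + constructor; auto.
    + intros t Ht; apply in_app_or in Ht; destruct Ht; auto.
    + simpl; rewrite length_app; unfold occb in C3; lia.
    + intros rest; rewrite fill_app, <- app_assoc, A4, C4; reflexivity.
Qed.

Lemma fill_size : forall s k ts,
  size (fst (fill k s ts)) + sizes (snd (fill k s ts)) <= size s + sizes ts.
Proof.
  induction s as [n|s IH|s b IH IHb] using rterm_nested_ind; intros k ts.
  - simpl; destruct (n =? k); [destruct ts as [|t ts'] | destruct (k <? n)];
      unfold sizes; simpl; rewrite ?size_rlift; lia.
  - simpl; specialize (IH (S k) ts); destruct (fill (S k) s ts); simpl in *; lia.
  - rewrite fill_app; specialize (IH k ts); destruct (fill k s ts) as [s' ts1]; simpl in *.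
    assert (Hbag : forall ts,
      sizes (fst (fillb k b ts)) + sizes (snd (fillb k b ts)) <= sizes b + sizes ts).
    { clear - IHb; induction IHb as [|u l Hu _ IHl]; intros ts; simpl; [lia|].
      specialize (Hu k ts); destruct (fill k u ts) as [u' ts1]; specialize (IHl ts1).
      destruct (fillb k l ts1); simpl in *; unfold sizes in *; simpl; lia. }
    specialize (Hbag ts1); destruct (fillb k b ts1); simpl in *; unfold sizes in *; lia.
Qed.

Lemma insert_all_perm {A} (x : A) : forall l p, In p (insert_all x l) -> Permutation p (x :: l).
Proof.
  induction l as [|y l IH]; simpl; intros p Hp.
  - destruct Hp as [<-|[]]; reflexivity.
  - destruct Hp as [<-|Hp]; [reflexivity|].
    apply in_map_iff in Hp; destruct Hp as [q [<- Hq]].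
    apply IH in Hq; rewrite Hq; apply perm_swap.
Qed.

Lemma perms_perm {A} : forall (l p : list A), In p (perms l) -> Permutation p l.
Proof.
  induction l as [|x l IH]; simpl; intros p Hp.
  - destruct Hp as [<-|[]]; reflexivity.
  - apply in_concat in Hp; destruct Hp as [q [Hq Hp]].
    apply in_map_iff in Hq; destruct Hq as [r [<- Hr]].
    apply insert_all_perm in Hp; rewrite Hp; apply perm_skip, IH, Hr.
Qed.

Lemma perms_self {A} : forall (l : list A), In l (perms l).
Proof.
  induction l as [|x l IH]; simpl; auto.
  apply in_concat; exists (insert_all x l); split; [apply in_map, IH|].
  destruct l; left; reflexivity.
Qed.

Lemma approx_rsubst s b M N : approx s M -> (forall t, In t b -> approx t N) ->
  forall t, In t (rsubst s b) -> approx t (subst 0 N M).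
Proof.
  intros Hs Hb t Ht; unfold rsubst in Ht.
  destruct (occ 0 s =? length b) eqn:E; [|destruct Ht].
  apply Nat.eqb_eq in E; apply in_map_iff in Ht; destruct Ht as [p [<- Hp]].
  apply perms_perm in Hp; apply (approx_fill N s M 0 p); auto.
  - intros x Hx; apply Hb; rewrite <- Hp; exact Hx.
  - rewrite (Permutation_length Hp); lia.
Qed.

Lemma approx_subst_rsubst u M N : approx u (subst 0 N M) ->
  exists s b, approx s M /\ (forall t, In t b -> approx t N) /\ In u (rsubst s b).
Proof.
  intros Hu; destruct (approx_subst_inv N u M 0 Hu) as [s [b [A [B [C D]]]]].
  exists s, b; repeat split; auto.
  unfold rsubst; rewrite C, Nat.eqb_refl; apply in_map_iff; exists b; split; [|apply perms_self].
  specialize (D []); rewrite app_nil_r in D; rewrite D; reflexivity.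
Qed.

(** * Reduction of finite sums *)

Definition seteq (S S' : rsum) : Prop := incl S S' /\ incl S' S.

Lemma seteq_refl S : seteq S S.
Proof. split; apply incl_refl. Qed.

Lemma seteq_trans S1 S2 S3 : seteq S1 S2 -> seteq S2 S3 -> seteq S1 S3.
Proof. intros [] []; split; eapply incl_tran; eauto. Qed.

Lemma seteq_app A A' B B' : seteq A A' -> seteq B B' -> seteq (A ++ B) (A' ++ B').
Proof. intros [] []; split; apply incl_app_app; auto. Qed.

Lemma seteq_perm A B : Permutation A B -> seteq A B.
Proof.
  intros H; split; intros x Hx; [rewrite <- H | rewrite H]; exact Hx.
Qed.

Lemma seteq_map (f : rterm -> rterm) A B : seteq A B -> seteq (map f A) (map f B).
Proof. intros []; split; apply incl_map; auto. Qed.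

Lemma seteq_sum_eq S S' : seteq S S' -> sum_eq S S'.
Proof. intros [H H']; split; intros s Hs; exists s; split; auto using req_refl. Qed.

Definition sum_step (S S' : rsum) : Prop :=
  exists (s0 : rterm) (T0 : rsum) (L : list (rterm * rsum)),
    rstep s0 T0 /\
    (forall p, In p L -> rstep (fst p) (snd p) \/ snd p = [fst p]) /\
    seteq S (s0 :: map fst L) /\
    seteq S' (T0 ++ concat (map snd L)).

Inductive sum_star : rsum -> rsum -> Prop :=
| sum_star_seteq S S' : seteq S S' -> sum_star S S'
| sum_star_step S S1 S2 : sum_step S S1 -> sum_star S1 S2 -> sum_star S S2.

Lemma sum_star_red_star S S' : sum_star S S' -> red_star S S'.
Proof.
  induction 1 as [S S' H|S S1 S2 [s0 [T0 [L [A [B [C D]]]]]] _ IH].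
  - constructor; apply seteq_sum_eq, H.
  - apply red_star_step with S1; auto.
    exists s0, T0, L; split; [|split; [|split]]; auto; apply seteq_sum_eq; assumption.
Qed.

Lemma sum_star_refl S : sum_star S S.
Proof. constructor; apply seteq_refl. Qed.

Lemma sum_star_one s T : rstep s T -> sum_star [s] T.
Proof.
  intros H; apply sum_star_step with T; [|apply sum_star_refl].
  exists s, T, []; split; [exact H|]; split; [intros ? []|].
  simpl; rewrite app_nil_r; split; apply seteq_refl.
Qed.

Lemma sum_star_seteq_both S0 S S' S1 :
  seteq S0 S -> sum_star S S' -> seteq S' S1 -> sum_star S0 S1.
Proof.
  intros H0 H; revert S0 S1 H0; induction H as [S S' E|S S1 S2 Hs _ IH]; intros S0 S3 H0 H3.
  - constructor; eapply seteq_trans; [eauto | eapply seteq_trans; eauto].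
  - apply sum_star_step with S1; [|apply IH; [apply seteq_refl | exact H3]].
    destruct Hs as [s0 [T0 [L [A [B [C D]]]]]].
    exists s0, T0, L; split; [|split; [|split]]; auto; eapply seteq_trans; eauto.
Qed.

Lemma sum_star_trans S1 S2 S3 : sum_star S1 S2 -> sum_star S2 S3 -> sum_star S1 S3.
Proof.
  intros H; revert S3; induction H as [S S' E|S S1 S2 E _ IH]; intros S3 H3.
  - exact (sum_star_seteq_both _ _ _ _ E H3 (seteq_refl _)).
  - apply sum_star_step with S1; auto.
Qed.

Lemma sum_step_app_r S S' R : sum_step S S' -> sum_step (S ++ R) (S' ++ R).
Proof.
  intros [s0 [T0 [L [A [B [C D]]]]]].
  exists s0, T0, (L ++ map (fun r => (r, [r]) : rterm * rsum) R); split; [|split; [|split]]; auto.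
  - intros p Hp; apply in_app_or in Hp; destruct Hp as [Hp|Hp]; auto.
    apply in_map_iff in Hp; destruct Hp as [r [<- _]]; right; reflexivity.
  - rewrite map_app, map_map, map_id; apply (seteq_app _ _ _ _ C (seteq_refl R)).
  - assert (E : concat (map snd (map (fun r => (r, [r]) : rterm * rsum) R)) = R)
      by (clear; induction R as [|r R IH]; simpl; f_equal; exact IH).
    rewrite map_app, concat_app, E, app_assoc.
    apply (seteq_app _ _ _ _ D (seteq_refl R)).
Qed.

Lemma sum_star_app_r S S' R : sum_star S S' -> sum_star (S ++ R) (S' ++ R).
Proof.
  induction 1.
  - constructor; apply seteq_app; auto using seteq_refl.
  - eapply sum_star_step; [apply sum_step_app_r; eauto | auto].
Qed.

Lemma sum_star_app S1 S1' S2 S2' :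
  sum_star S1 S1' -> sum_star S2 S2' -> sum_star (S1 ++ S2) (S1' ++ S2').
Proof.
  intros H1 H2; apply sum_star_trans with (S1' ++ S2); [apply sum_star_app_r, H1|].
  eapply sum_star_seteq_both; [apply seteq_perm, Permutation_app_comm | |
    apply seteq_perm, Permutation_app_comm].
  apply sum_star_app_r, H2.
Qed.


Lemma sum_star_map (f : rterm -> rterm) :
  (forall s T, rstep s T -> rstep (f s) (map f T)) ->
  forall S S', sum_star S S' -> sum_star (map f S) (map f S').
Proof.
  intros Hf S S' H; induction H as [S S' E|S S1 S2 [s0 [T0 [L [A [B [C D]]]]]] _ IH].
  - constructor; apply seteq_map, E.
  - apply sum_star_step with (map f S1); auto.
    exists (f s0), (map f T0), (map (fun p => (f (fst p), map f (snd p))) L).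
    split; [|split; [|split]]; auto.
    + intros p Hp; apply in_map_iff in Hp; destruct Hp as [[a T] [<- Hq]]; simpl.
      destruct (B _ Hq) as [E|E]; simpl in E; [left; auto | right; subst; reflexivity].
    + rewrite map_map; simpl; rewrite <- map_map with (f := fst).
      apply (seteq_map f _ _ C).
    + rewrite map_map; simpl; rewrite <- map_map with (f := snd), <- concat_map, <- map_app.
      apply seteq_map, D.
Qed.

Lemma sum_star_concat_map {A} (l : list A) (f : A -> rterm) (g : A -> rsum) :
  (forall x, In x l -> sum_star [f x] (g x)) -> sum_star (map f l) (concat (map g l)).
Proof.
  induction l as [|x l IH]; intros H; simpl; [apply sum_star_refl|].
  apply (sum_star_app [f x]); [apply H; left; reflexivity|].
  apply IH; intros y Hy; apply H; right; exact Hy.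
Qed.

Lemma Forall2_choice {A B} (P : A -> B -> Prop) l :
  (forall x, In x l -> exists y, P x y) -> exists ys, Forall2 P l ys.
Proof.
  induction l as [|x l IH]; intros H; [exists []; constructor|].
  destruct (H x (or_introl eq_refl)) as [y Hy].
  destruct IH as [ys Hys]; [intros; apply H; right; assumption|].
  exists (y :: ys); constructor; assumption.
Qed.

Lemma Forall2_In_l {A B} (P : A -> B -> Prop) l ys x :
  Forall2 P l ys -> In x l -> exists y, In y ys /\ P x y.
Proof.
  induction 1 as [|a b l ys Hab _ IH]; simpl; [intros []|].
  intros [<-|Hx]; [exists b; auto|].
  destruct (IH Hx) as [y [Hy Py]]; exists y; auto.
Qed.

Lemma Forall2_In_r {A B} (P : A -> B -> Prop) l ys y :
  Forall2 P l ys -> In y ys -> exists x, In x l /\ P x y.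
Proof.
  induction 1 as [|a b l ys Hab _ IH]; simpl; [intros []|].
  intros [<-|Hy]; [exists a; auto|].
  destruct (IH Hy) as [x [Hx Px]]; exists x; auto.
Qed.

Lemma sum_star_concat l Ts :
  Forall2 (fun x T => sum_star [x] T) l Ts -> sum_star l (concat Ts).
Proof.
  induction 1; simpl; [apply sum_star_refl|].
  apply (sum_star_app [x] _ l); auto.
Qed.

(* The multilinear expansion of a bag of sums: one element chosen in each sum. *)
Fixpoint choices (Ts : list rsum) : list (list rterm) :=
  match Ts with
  | [] => [[]]
  | T :: Ts' => concat (map (fun t => map (cons t) (choices Ts')) T)
  end.

Lemma In_choices : forall Ts b, In b (choices Ts) <-> Forall2 (@In rterm) b Ts.
Proof.
  induction Ts as [|T Ts IH]; intros b; simpl; split.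
  - intros [<-|[]]; constructor.
  - intros H; inversion H; left; reflexivity.
  - intros H; apply in_concat in H; destruct H as [l [Hl Hb]].
    apply in_map_iff in Hl; destruct Hl as [t [<- Ht]].
    apply in_map_iff in Hb; destruct Hb as [b' [<- Hb']].
    constructor; [exact Ht | apply IH, Hb'].
  - intros H; inversion H as [|t ? b' ? Ht Hb']; subst.
    apply in_concat; exists (map (cons t) (choices Ts)); split.
    + apply in_map_iff; exists t; auto.
    + apply in_map, IH, Hb'.
Qed.

Definition app_sum (T0 : rsum) (Ts : list rsum) : rsum :=
  concat (map (fun a => map (RApp a) (choices Ts)) T0).

Lemma In_app_sum T0 Ts x :
  In x (app_sum T0 Ts) <-> exists a b, In a T0 /\ In b (choices Ts) /\ x = RApp a b.
Proof.
  unfold app_sum; split.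
  - intros H; apply in_concat in H; destruct H as [l [Hl Hx]].
    apply in_map_iff in Hl; destruct Hl as [a [<- Ha]].
    apply in_map_iff in Hx; destruct Hx as [b [<- Hb]]; eauto.
  - intros [a [b [Ha [Hb ->]]]]; apply in_concat; exists (map (RApp a) (choices Ts)).
    split; [apply in_map_iff; eauto | apply in_map; exact Hb].
Qed.

Lemma approx_app_sum P Q T0 Ts :
  (forall a, In a T0 -> approx a P) -> (forall T, In T Ts -> forall x, In x T -> approx x Q) ->
  forall x, In x (app_sum T0 Ts) -> approx x (App P Q).
Proof.
  intros H0 H1 x Hx; apply In_app_sum in Hx; destruct Hx as [a [b [Ha [Hb ->]]]].
  constructor; [auto|]; apply In_choices in Hb; intros y Hy.
  destruct (Forall2_In_l _ _ _ _ Hb Hy) as [T [HT HyT]]; eauto.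
Qed.

Lemma sum_star_bag a : forall b Ts, Forall2 (fun t T => sum_star [t] T) b Ts -> forall pre,
  sum_star [RApp a (pre ++ b)] (map (fun b' => RApp a (pre ++ b')) (choices Ts)).
Proof.
  induction 1 as [|t T b Ts Ht _ IH]; intros pre; [apply sum_star_refl|].
  set (f := fun t' => RApp a (pre ++ t' :: b)).
  apply sum_star_trans with (map f T).
  - apply (sum_star_map f) with (S := [t]); [|exact Ht].
    intros s U HU; apply rstep_appr, HU.
  - simpl; rewrite concat_map, map_map.
    apply sum_star_concat_map; intros t' _; rewrite map_map.
    specialize (IH (pre ++ [t'])); rewrite <- app_assoc in IH.
    replace (map (fun b' => RApp a (pre ++ t' :: b')) (choices Ts))
      with (map (fun b' => RApp a ((pre ++ [t']) ++ b')) (choices Ts)); [exact IH|].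
    apply map_ext; intros b'; rewrite <- app_assoc; reflexivity.
Qed.

Lemma sum_star_app_sum s0 T0 b Ts :
  sum_star [s0] T0 -> Forall2 (fun t T => sum_star [t] T) b Ts ->
  sum_star [RApp s0 b] (app_sum T0 Ts).
Proof.
  intros H0 Hb; apply sum_star_trans with (map (fun x => RApp x b) T0).
  - apply (sum_star_map (fun x => RApp x b)) with (S := [s0]); [|exact H0].
    intros s U HU; apply rstep_appl, HU.
  - apply sum_star_concat_map; intros a _; apply (sum_star_bag a b Ts Hb []).
Qed.

Lemma sum_star_lam s T : sum_star [s] T -> sum_star [RLam s] (map RLam T).
Proof. apply (sum_star_map RLam (rstep_lam)). Qed.

Lemma rstep_size : forall s T, rstep s T -> forall t, In t T -> size t < size s.
Proof.
  induction 1 as [s b| s T _ IH | s b T _ IH | s b1 t b2 T _ IH]; intros t0 Ht.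
  - unfold rsubst in Ht; destruct (occ 0 s =? length b); [|destruct Ht].
    apply in_map_iff in Ht; destruct Ht as [p [<- Hp]].
    pose proof (fill_size s 0 p); apply perms_perm, sizes_perm in Hp.
    simpl; unfold sizes in *; lia.
  - apply in_map_iff in Ht; destruct Ht as [x [<- Hx]]; specialize (IH x Hx); simpl; lia.
  - apply in_map_iff in Ht; destruct Ht as [x [<- Hx]]; specialize (IH x Hx); simpl; lia.
  - apply in_map_iff in Ht; destruct Ht as [x [<- Hx]]; specialize (IH x Hx); simpl.
    rewrite !map_app, !list_sum_app; simpl; lia.
Qed.

Lemma sum_star_size n : forall S S', sum_star S S' ->
  (forall t, In t S -> size t <= n) -> forall t, In t S' -> size t <= n.
Proof.
  induction 1 as [S S' [_ E] | S S1 S2 [s0 [T0 [L [A [B [[_ C] [D _]]]]]]] _ IH]; intros HS.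
  - intros t Ht; apply HS, E, Ht.
  - apply IH; intros t Ht; apply D, in_app_or in Ht; destruct Ht as [Ht|Ht].
    + apply (rstep_size _ _ A) in Ht; specialize (HS s0 (C _ (or_introl eq_refl))); lia.
    + apply in_concat in Ht; destruct Ht as [l [Hl Ht]].
      apply in_map_iff in Hl; destruct Hl as [p [<- Hp]].
      assert (size (fst p) <= n) by (apply HS, C; right; apply in_map, Hp).
      destruct (B p Hp) as [E|E].
      * apply (rstep_size _ _ E) in Ht; lia.
      * rewrite E in Ht; destruct Ht as [<-|[]]; assumption.
Qed.

(** * Simulation of reduction on Taylor expansions *)

Definition reduces_to (s : rterm) (N : term) : Prop :=
  exists T, sum_star [s] T /\ forall t, In t T -> approx t N.

Definition forward (M N : term) : Prop := forall s, approx s M -> reduces_to s N.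

Definition reached (M N : term) (u : rterm) : Prop :=
  exists s T, approx s M /\ sum_star [s] T /\ (forall t, In t T -> approx t N) /\ In u T.

Definition backward (M N : term) : Prop := forall u, approx u N -> reached M N u.

Lemma reduces_to_bind s T1 N :
  sum_star [s] T1 -> (forall t, In t T1 -> reduces_to t N) -> reduces_to s N.
Proof.
  intros H1 H2; destruct (Forall2_choice _ T1 H2) as [Ts HTs].
  exists (concat Ts); split.
  - apply sum_star_trans with T1; [exact H1|].
    apply sum_star_concat; eapply Forall2_impl; [|exact HTs]; intros ? ? []; auto.
  - intros x Hx; apply in_concat in Hx; destruct Hx as [T [HT Hx]].
    destruct (Forall2_In_r _ _ _ _ HTs HT) as [t [_ [_ HP]]]; auto.
Qed.

Lemma forward_bisim M M' : bisim M M' -> forward M M'.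
Proof.
  intros H s Hs; exists [s]; split; [apply sum_star_refl|].
  intros t [<-|[]]; eapply approx_bisim; eauto.
Qed.

Lemma backward_bisim M M' : bisim M M' -> backward M M'.
Proof.
  intros H u Hu; exists u, [u]; split; [eapply approx_bisim; eauto using bisim_sym|].
  split; [apply sum_star_refl|]; split; [intros t [<-|[]]; exact Hu | left; reflexivity].
Qed.

Lemma forward_trans M1 M2 M3 : forward M1 M2 -> forward M2 M3 -> forward M1 M3.
Proof.
  intros H1 H2 s Hs; destruct (H1 s Hs) as [T1 [A B]].
  apply (reduces_to_bind s T1); auto.
Qed.

Lemma reached_compose M1 M2 M3 u :
  backward M1 M2 -> forward M2 M3 -> reached M2 M3 u -> reached M1 M3 u.
Proof.
  intros HB HF [w [Tw [Aw [Bw [Cw Dw]]]]].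
  destruct (HB w Aw) as [s [T1 [A1 [B1 [C1 D1]]]]].
  destruct (Forall2_choice _ T1 (fun t Ht => HF t (C1 t Ht))) as [Ts HTs].
  (* [w] occurs in [T1]; it is reduced along [Tw], to keep [u] in the final sum. *)
  exists s, (concat Ts ++ Tw); split; [exact A1|]; split; [|split].
  - apply sum_star_trans with (T1 ++ [w]).
    + eapply sum_star_seteq_both; [apply seteq_refl | exact B1 |].
      split; [apply incl_appl, incl_refl | apply incl_app; [apply incl_refl|]].
      intros x [<-|[]]; exact D1.
    + apply sum_star_app; [|exact Bw].
      apply sum_star_concat; eapply Forall2_impl; [|exact HTs]; intros ? ? []; auto.
  - intros x Hx; apply in_app_or in Hx; destruct Hx as [Hx|Hx]; [|auto].
    apply in_concat in Hx; destruct Hx as [T [HT Hx]].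
    destruct (Forall2_In_r _ _ _ _ HTs HT) as [t [_ [_ HP]]]; auto.
  - apply in_or_app; right; exact Dw.
Qed.

Lemma backward_trans M1 M2 M3 :
  backward M1 M2 -> forward M2 M3 -> backward M2 M3 -> backward M1 M3.
Proof. intros H1 H2 H3 u Hu; eapply reached_compose; eauto. Qed.

Lemma reduces_to_lam s P : reduces_to s P -> reduces_to (RLam s) (Lam P).
Proof.
  intros [T [A B]]; exists (map RLam T); split; [apply sum_star_lam, A|].
  intros t Ht; apply in_map_iff in Ht; destruct Ht as [x [<- Hx]]; constructor; auto.
Qed.

Lemma forward_lam P P' : forward P P' -> forward (Lam P) (Lam P').
Proof. intros H s Hs; inversion Hs; subst; apply reduces_to_lam; auto. Qed.

Lemma reached_lam P P' u : reached P P' u -> reached (Lam P) (Lam P') (RLam u).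
Proof.
  intros [s [T [A [B [C D]]]]]; exists (RLam s), (map RLam T).
  split; [constructor; exact A|]; split; [apply sum_star_lam, B|].
  split; [|apply in_map, D].
  intros t Ht; apply in_map_iff in Ht; destruct Ht as [x [<- Hx]]; constructor; auto.
Qed.

Lemma backward_lam P P' : backward P P' -> backward (Lam P) (Lam P').
Proof. intros H u Hu; inversion Hu; subst; apply reached_lam; auto. Qed.

Lemma reduces_to_app s0 b P Q :
  reduces_to s0 P -> (forall t, In t b -> reduces_to t Q) -> reduces_to (RApp s0 b) (App P Q).
Proof.
  intros [T0 [A B]] Hb.
  destruct (Forall2_choice _ b Hb) as [Ts HTs].
  exists (app_sum T0 Ts); split.
  - apply sum_star_app_sum; [exact A|]; eapply Forall2_impl; [|exact HTs]; intros ? ? []; auto.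
  - apply approx_app_sum; [exact B|]; intros T HT.
    destruct (Forall2_In_r _ _ _ _ HTs HT) as [x [_ [_ HQ]]]; exact HQ.
Qed.

Lemma forward_app P P' Q Q' : forward P P' -> forward Q Q' -> forward (App P Q) (App P' Q').
Proof. intros HP HQ s Hs; inversion Hs; subst; apply reduces_to_app; auto. Qed.

Lemma reached_app P P' Q Q' u0 b :
  reached P P' u0 -> (forall u, In u b -> reached Q Q' u) ->
  reached (App P Q) (App P' Q') (RApp u0 b).
Proof.
  intros [s0 [T0 [A0 [B0 [C0 D0]]]]] H.
  destruct (Forall2_choice (fun u p => approx (fst p) Q /\ sum_star [fst p] (snd p) /\
     (forall t, In t (snd p) -> approx t Q') /\ In u (snd p)) b) as [ps Hps].
  { intros u Hu; destruct (H u Hu) as [s [T HsT]]; exists (s, T); exact HsT. }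
  exists (RApp s0 (map fst ps)), (app_sum T0 (map snd ps)).
  split; [|split; [|split]].
  - constructor; [exact A0|]; intros s Hs; apply in_map_iff in Hs.
    destruct Hs as [p [<- Hp]]; destruct (Forall2_In_r _ _ _ _ Hps Hp) as [? [_ [? _]]]; auto.
  - apply sum_star_app_sum; [exact B0|].
    clear - Hps; induction Hps as [|u p ? ? [_ [? _]]]; constructor; auto.
  - apply approx_app_sum; [exact C0|]; intros T HT; apply in_map_iff in HT.
    destruct HT as [p [<- Hp]]; destruct (Forall2_In_r _ _ _ _ Hps Hp) as [? [_ [_ [_ [? _]]]]].
    auto.
  - apply In_app_sum; exists u0, b; repeat split; [exact D0|].
    apply In_choices; clear - Hps; induction Hps as [|u p ? ? [_ [_ [_ ?]]]]; constructor; auto.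
Qed.

Lemma backward_app P P' Q Q' :
  backward P P' -> backward Q Q' -> backward (App P Q) (App P' Q').
Proof. intros HP HQ u Hu; inversion Hu; subst; apply reached_app; auto. Qed.

Lemma forward_beta M N : forward (App (Lam M) N) (subst 0 N M).
Proof.
  intros s Hs; inversion Hs as [| |? b ? ? Hs0 Hb]; subst.
  inversion Hs0 as [|s1 ? Hs1|]; subst.
  exists (rsubst s1 b); split; [apply sum_star_one; constructor|].
  apply approx_rsubst; assumption.
Qed.

Lemma backward_beta M N : backward (App (Lam M) N) (subst 0 N M).
Proof.
  intros u Hu; destruct (approx_subst_rsubst u M N Hu) as [s [b [A [B C]]]].
  exists (RApp (RLam s) b), (rsubst s b); split; [constructor; [constructor|]; auto|].
  split; [apply sum_star_one; constructor|]; split; [apply approx_rsubst|]; auto.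
Qed.

Lemma bstep_simulation M M' : bstep M M' -> forward M M' /\ backward M M'.
Proof.
  pose proof (fun M => forward_bisim M M (bisim_refl M)) as forward_refl.
  pose proof (fun M => backward_bisim M M (bisim_refl M)) as backward_refl.
  induction 1 as [M N|M M' _ [IH1 IH2]|M M' N _ [IH1 IH2]|M N N' _ [IH1 IH2]].
  - split; [apply forward_beta | apply backward_beta].
  - split; [apply forward_lam | apply backward_lam]; auto.
  - split; [apply forward_app | apply backward_app]; auto.
  - split; [apply forward_app | apply backward_app]; auto.
Qed.

Lemma bstar_simulation M M' : bstar M M' -> forward M M' /\ backward M M'.
Proof.
  induction 1 as [M M' H|M M1 M2 H _ [IH1 IH2]].
  - split; [apply forward_bisim | apply backward_bisim]; exact H.
  - destruct (bstep_simulation _ _ H) as [F B].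
    split; [eapply forward_trans | eapply backward_trans]; eauto.
Qed.

Section InfinitaryReduction.
Variable R : term -> term -> Prop.
Hypothesis R_ired_step : forall M N, R M N -> ired_step R M N.

Lemma ired_step_forward M N : ired_step R M N -> forward M N.
Proof.
  intros Hi s; revert M N Hi; induction s as [s IH] using (induction_ltof1 _ size).
  intros M N Hi Hs; destruct Hi as [M n Hb|M P P' Hb Hi|M P Q P' Q' Hb Hi HRQ];
    destruct (proj1 (bstar_simulation _ _ Hb) s Hs) as [T1 [A B]]; [exists T1; auto| |];
    apply (reduces_to_bind s T1); [exact A | | exact A |]; intros t Ht;
    assert (Hsize : size t <= size s)
      by (apply (sum_star_size _ _ _ A); [intros x [<-|[]]; auto | exact Ht]);
    specialize (B t Ht).
  - inversion B as [|t1 ? Ht1|]; subst; simpl in Hsize.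
    apply reduces_to_lam, (IH t1 ltac:(unfold ltof; lia) P); [exact Hi | exact Ht1].
  - inversion B as [| |t0 b ? ? Ht0 Hb0]; subst; simpl in Hsize.
    apply reduces_to_app; [apply (IH t0 ltac:(unfold ltof; lia) P); [exact Hi | exact Ht0]|].
    intros x Hx; pose proof (size_In_bag x b Hx).
    apply (IH x ltac:(unfold ltof, sizes in *; lia) Q); [apply R_ired_step, HRQ | apply Hb0, Hx].
Qed.

Lemma ired_step_reached : forall u M N, ired_step R M N -> approx u N -> reached M N u.
Proof.
  induction u as [n|u IH|u b IH IHb] using rterm_nested_ind; intros M N Hi Hu;
    destruct Hi as [M k Hb|M P P' Hb Hi|M P Q P' Q' Hb Hi HRQ]; inversion Hu; subst.
  - apply (proj2 (bstar_simulation _ _ Hb)); exact Hu.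
  - apply reached_compose with (M2 := Lam P); [apply (proj2 (bstar_simulation _ _ Hb))| |].
    + apply forward_lam, ired_step_forward, Hi.
    + apply reached_lam, (IH _ _ Hi); assumption.
  - apply reached_compose with (M2 := App P Q); [apply (proj2 (bstar_simulation _ _ Hb))| |].
    + apply forward_app; apply ired_step_forward; [exact Hi | apply R_ired_step, HRQ].
    + apply reached_app; [apply (IH _ _ Hi); assumption|].
      rewrite Forall_forall in IHb; intros x Hx; apply (IHb x Hx Q); auto.
Qed.

End InfinitaryReduction.

Theorem mainTheorem8 (M N : term) :
  wf001 M -> wf001 N -> ired M N ->
  exists (I : Type) (s : I -> rterm) (T : I -> rsum),
    (forall u, approx u M <-> exists i, req u (s i)) /\
    (forall u, approx u N <-> exists i t, In t (T i) /\ req u t) /\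
    (forall i, red_star [s i] (T i)).
Proof.
  (* Approximants are finite. *)
  intros _ _ [R [HMN HR]].
  pose (I := {p : rterm * rsum | approx (fst p) M /\ sum_star [fst p] (snd p) /\
                                 forall t, In t (snd p) -> approx t N}).
  exists I, (fun i => fst (proj1_sig i)), (fun i => snd (proj1_sig i)).
  split; [|split]; [intros u; split.. |].
  - intros Hu; destruct (ired_step_forward R HR M N (HR _ _ HMN) u Hu) as [T [A B]].
    exists (exist _ (u, T) (conj Hu (conj A B))); apply req_refl.
  - intros [[[s T] HsT] Hr]; exact (req_approx _ _ Hr _ (proj1 HsT)).
  - intros Hu; destruct (ired_step_reached R HR u M N (HR _ _ HMN) Hu) as [s [T [A [B [C D]]]]].
    exists (exist _ (s, T) (conj A (conj B C))), u; split; [exact D | apply req_refl].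
  - intros [[[s T] HsT] [t [Ht Hr]]]; exact (req_approx _ _ Hr _ (proj2 (proj2 HsT) t Ht)).
  - intros [[s T] HsT]; apply sum_star_red_star, (proj1 (proj2 HsT)).
Qed.
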